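(* For every integer $k\ge 2$, $M_k(3)\le 2^k$.
   Context: All graphs are finite and simple. A path $v_1,\ldots,v_r$ in a graph $G$ is degree-monotone if $\deg_G(v_1)\le\cdots\le\deg_G(v_r)$; its order is $r$. Let $mp(G)$ be the maximum order of a degree-monotone path in $G$. For a $k$-edge-coloring of $K_n$ with colors $1,\ldots,k$, let $G_j$ be the spanning subgraph consisting of the edges colored $j$ (degrees taken in $G_j$). $M_k(m)$ is the minimum integer $M$ such that for every $n\ge M$ and every $k$-edge-coloring of $K_n$ there is some $j$ with $mp(G_j)\ge m$. *)

From mathcomp Require Import all_boot.
Set Implicit Arguments. Unset Strict Implicit. Unset Printing Implicit Defensive.

(* A simple graph on vertex set 'I_n is given by a symmetric irreflexive
   adjacency relation. *)
Definition deg (n : nat) (adj : rel 'I_n) (v : 'I_n) : nat :=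
  #|[set u | adj v u]|.

Definition dm_path (n : nat) (adj : rel 'I_n) (s : seq 'I_n) : bool :=
  [&& uniq s,
      (if s is x :: s' then path adj x s' else true)
    & sorted leq (map (deg adj) s)].

Definition mp (n : nat) (adj : rel 'I_n) : nat :=
  \max_(r < n.+1 | [exists t : r.-tuple 'I_n, dm_path adj t]) r.

(* A k-edge-coloring of K_n: a symmetric map c giving color c u v to the
   edge uv (u <> v; values on the diagonal are irrelevant).  Colors are
   'I_k (standing for 1..k). *)
Definition colG (n k : nat) (c : 'I_n -> 'I_n -> 'I_k) (j : 'I_k) : rel 'I_n :=
  fun u v => (u != v) && (c u v == j).

From mathcomp Require Import all_boot zify.
Set Implicit Arguments. Unset Strict Implicit. Unset Printing Implicit Defensive.

(* Suppose no colour class G_j has a degree-monotone path on three vertices.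
   Order the vertices of G_j by degree and call a vertex upper in G_j if it has
   a smaller neighbour.  Then every edge of G_j joins a lower vertex to an upper
   one of no smaller degree, so the vector of upper-bits of a vertex over all
   colours separates any two vertices (in the colour of the edge joining them),
   whence n <= 2^k.  If n = 2^k the vectors exhaust {0,1}^k, so flipping bit j
   of a vertex's vector yields a G_j-neighbour: G_j has no isolated vertex and
   as many upper as lower vertices.  As n - 1 > k, some vertex has two
   neighbours of one colour j, which forces an edge of G_j whose lower end has
   strictly smaller degree.  Weighting each edge by 1/deg of its lower end
   counts the lower vertices, by 1/deg of its upper end the upper vertices, and
   the strict edge makes the first count larger: a contradiction. *)

Lemma ltn_sum_cond (I : finType) (P : pred I) (F G : I -> nat) i0 :
  P i0 -> (forall i, P i -> F i <= G i) -> F i0 < G i0 ->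
  \sum_(i | P i) F i < \sum_(i | P i) G i.
Proof.
move=> Pi0 leFG ltFG; rewrite (bigD1 i0) //= [X in _ < X](bigD1 i0) //=.
by rewrite -addSn leq_add // leq_sum // => i /andP[/leFG].
Qed.

Lemma ltn_div2l_dvd m d1 d2 :
  0 < m -> d1 < d2 -> d1 %| m -> d2 %| m -> m %/ d2 < m %/ d1.
Proof.
move=> m_gt0 lt_d12 /divnK e1 /divnK e2.
move: (m %/ d1) (m %/ d2) e1 e2 => q1 q2 e1 e2.
rewrite ltnNge; apply/negP => le_q12.
have q2_gt0 : 0 < q2 by case: q2 e2 {le_q12}; lia.
have : q1 * d1 <= q2 * d1 by rewrite leq_mul2r le_q12 orbT.
have : q2 * d1 < q2 * d2 by rewrite ltn_mul2l q2_gt0.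
lia.
Qed.

Lemma dm_path_size_le_mp n (adj : rel 'I_n) (s : seq 'I_n) :
  dm_path adj s -> size s <= mp adj.
Proof.
move=> dm_s; have size_lt : size s < n.+1.
  by case/and3P: dm_s => /card_uniqP <- _ _; rewrite ltnS -[n in _ <= n]card_ord max_card.
apply: (@leq_bigmax_cond _ _ (fun r : 'I_n.+1 => nat_of_ord r) (Ordinal size_lt)).
by apply/existsP; exists (in_tuple s).
Qed.

Lemma deg_le n (adj : rel 'I_n) v : deg adj v <= n.
Proof. by rewrite -[n in _ <= n]card_ord max_card. Qed.

Section MonotonePathFree.

Variables (n : nat) (adj : rel 'I_n).
Hypothesis adj_sym : symmetric adj.
Hypothesis adj_irr : irreflexive adj.
Hypothesis no_dm3 : forall x y z, x != z -> adj x y -> adj y z ->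
  deg adj x <= deg adj y <= deg adj z -> False.

Local Notation deg := (deg adj).

(* A strict total order refining the degree order, ties broken by index. *)
Definition deg_key (v : 'I_n) : nat := deg v * n + v.

Definition upper (v : 'I_n) : bool := [exists w, adj v w && (deg_key w < deg_key v)].

Lemma deg_key_inj : injective deg_key.
Proof.
move=> x y /(congr1 (modn^~ n)).
by rewrite /deg_key !modnMDl !modn_small //; apply: val_inj.
Qed.

Lemma deg_key_lt_deg_le x y : deg_key x < deg_key y -> deg x <= deg y.
Proof.
rewrite /deg_key => lt_key; rewrite leqNgt; apply/negP => lt_deg.
have : (deg y).+1 * n <= deg x * n by rewrite leq_mul2r lt_deg orbT.
have := ltn_ord y; lia.
Qed.

Lemma upper_edge_deg_key u v : adj u v -> deg_key v < deg_key u -> upper u.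
Proof. by move=> auv lt_vu; apply/existsP; exists v; rewrite auv. Qed.

Lemma lower_edge_deg_key u v : adj u v -> deg_key u < deg_key v -> ~~ upper u.
Proof.
move=> auv lt_uv; apply/existsP => -[w /andP[auw lt_wu]].
have neq_wv : w != v by apply: contraTneq lt_uv => <-; rewrite -leqNgt ltnW.
apply: (no_dm3 neq_wv _ auv); first by rewrite adj_sym.
by rewrite !deg_key_lt_deg_le.
Qed.

Lemma deg_key_edge_neq u v : adj u v -> deg_key u != deg_key v.
Proof. by apply: contraTneq => /deg_key_inj ->; rewrite adj_irr. Qed.

Lemma upper_edge u v : adj u v -> upper u = ~~ upper v.
Proof.
move=> auv; have avu : adj v u by rewrite adj_sym.
case: (ltngtP (deg_key u) (deg_key v)) => [lt_uv|lt_vu|/eqP].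
- by rewrite (negbTE (lower_edge_deg_key auv lt_uv)) (upper_edge_deg_key avu).
- by rewrite (upper_edge_deg_key auv) // (negbTE (lower_edge_deg_key avu lt_vu)).
- by rewrite (negbTE (deg_key_edge_neq auv)).
Qed.

Lemma lower_edge_deg_le u v : ~~ upper u -> adj u v -> deg u <= deg v.
Proof.
move=> lower_u auv; apply: deg_key_lt_deg_le.
case: (ltngtP (deg_key u) (deg_key v)) => // [lt_vu|/eqP].
- by rewrite (upper_edge_deg_key auv lt_vu) in lower_u.
- by rewrite (negbTE (deg_key_edge_neq auv)).
Qed.

Lemma exists_lower_edge_deg_lt v : 1 < deg v ->
  exists a b, [/\ adj a b, ~~ upper a & deg a < deg b].
Proof.
case/card_gt1P => w1 [w2 []]; rewrite !inE => avw1 avw2 neq_w12.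
have aw1v : adj w1 v by rewrite adj_sym.
have aw2v : adj w2 v by rewrite adj_sym.
case upper_v: (upper v).
- have lower_w u : adj u v -> ~~ upper u by move=> auv; rewrite (upper_edge auv) upper_v.
  exists w1, v; split; rewrite ?lower_w // ltnNge; apply/negP => le_vw1.
  apply: (no_dm3 (_ : w2 != w1) aw2v avw1); first by rewrite eq_sym.
  by rewrite le_vw1 lower_edge_deg_le ?lower_w.
- have le_w u : adj v u -> deg v <= deg u by apply: lower_edge_deg_le; rewrite upper_v.
  exists v, w1; split; rewrite ?upper_v // ltnNge; apply/negP => le_w1v.
  by apply: (no_dm3 neq_w12 aw1v avw2); rewrite le_w1v le_w.
Qed.

Lemma card_upper_lt_lower (deg_gt0 : forall u, 0 < deg u) a b :
  adj a b -> ~~ upper a -> deg a < deg b ->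
  #|[set u | upper u]| < #|[set u | ~~ upper u]|.
Proof.
move=> aab lower_a lt_ab.
pose w u := n`! %/ deg u. (* 1/deg u, scaled by n`! to stay in nat *)
have deg_dvd u : deg u %| n`! by rewrite dvdn_fact ?deg_gt0 ?deg_le.
have star_weight u : \sum_(v | adj u v) w u = n`!.
  by rewrite sum_nat_cond_const mulnC divnK.
have lower_sum : \sum_(u | ~~ upper u) \sum_(v | adj u v) w u = #|[set u | ~~ upper u]| * n`!.
  by rewrite -sum_nat_cond_const; apply: eq_bigr => u _.
have upper_sum : \sum_(u | ~~ upper u) \sum_(v | adj u v) w v = #|[set u | upper u]| * n`!.
  have lower_upper u v : ~~ upper u -> adj u v -> upper v.
    by move=> lower_u auv; rewrite (upper_edge auv) negbK in lower_u.
  rewrite (exchange_big_dep upper lower_upper) /=.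
  rewrite -sum_nat_cond_const; apply: eq_bigr => v upper_v.
  rewrite -(star_weight v); apply: eq_bigl => u.
  rewrite adj_sym; case avu: (adj v u); rewrite ?andbF // andbT.
  by rewrite (upper_edge avu) in upper_v.
rewrite -(ltn_pmul2r (fact_gt0 n)) -lower_sum -upper_sum.
apply: (ltn_sum_cond (i0 := a)) => // [u lower_u|].
- by apply: leq_sum => v auv; rewrite leq_div2l ?deg_gt0 ?lower_edge_deg_le.
apply: (ltn_sum_cond (i0 := b)) => // [v aav|].
- by rewrite leq_div2l ?deg_gt0 ?lower_edge_deg_le.
- by rewrite ltn_div2l_dvd ?fact_gt0.
Qed.

End MonotonePathFree.

Lemma exists_deg_colG_gt1 n k (c : 'I_n -> 'I_n -> 'I_k) (v : 'I_n) :
  k < n.-1 -> exists j, 1 < deg (colG c j) v.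
Proof.
move=> lt_k_n; apply/existsP; apply: contraTT lt_k_n => /existsPn deg_le1.
have c_inj : {in [set~ v] &, injective (c v)}.
  move=> u1 u2; rewrite !inE => neq_u1 neq_u2 e.
  have := deg_le1 (c v u1); rewrite -leqNgt => /card_le1_eqP; apply.
    by rewrite /colG e inE eqxx andbT eq_sym.
  by rewrite inE /colG eqxx andbT eq_sym.
have := max_card (c v @: [set~ v]).
by rewrite (card_in_imset c_inj) cardsC1 !card_ord leqNgt.
Qed.

Section MonotonePathFreeColoring.

Variables (n k : nat) (c : 'I_n -> 'I_n -> 'I_k).
Hypothesis c_sym : forall u v, c u v = c v u.
Hypothesis mp_colG_lt3 : forall j, mp (colG c j) < 3.

Lemma colG_sym j : symmetric (colG c j).
Proof. by move=> u v; rewrite /colG eq_sym c_sym. Qed.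

Lemma colG_irr j : irreflexive (colG c j).
Proof. by move=> u; rewrite /colG eqxx. Qed.

Lemma colG_no_dm3 j x y z : x != z -> colG c j x y -> colG c j y z ->
  deg (colG c j) x <= deg (colG c j) y <= deg (colG c j) z -> False.
Proof.
move=> neq_xz axy ayz /andP[le_xy le_yz].
have /andP[neq_xy _] := axy; have /andP[neq_yz _] := ayz.
have := mp_colG_lt3 j; rewrite ltnNge (dm_path_size_le_mp (s := [:: x; y; z])) //.
by rewrite /dm_path /= !inE negb_or neq_xy neq_xz neq_yz axy ayz le_xy le_yz.
Qed.

Local Notation upperG j := (upper (colG c j)).

Lemma upper_colG_edge u v : u != v -> upperG (c u v) u = ~~ upperG (c u v) v.
Proof.
move=> neq_uv; apply: upper_edge (colG_sym _) (colG_irr _) (@colG_no_dm3 _) _ _ _.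
by rewrite /colG neq_uv eqxx.
Qed.

Definition upper_vector (v : 'I_n) : {ffun 'I_k -> bool} := [ffun j => upperG j v].

Lemma upper_vector_inj : injective upper_vector.
Proof.
move=> u v /ffunP /(_ (c u v)); rewrite !ffunE; apply: contra_eq => neq_uv.
by rewrite upper_colG_edge //; case: (upperG _ v).
Qed.

Hypothesis pow_le_n : 2 ^ k <= n.

Lemma upper_vector_bij : bijective upper_vector.
Proof. by apply: (inj_card_bij upper_vector_inj); rewrite card_ffun card_bool !card_ord. Qed.

Definition flip_at (j : 'I_k) (f : {ffun 'I_k -> bool}) : {ffun 'I_k -> bool} :=
  [ffun i => (i == j) (+) f i].

Lemma flip_at_inj j : injective (flip_at j).
Proof. by move=> f g /ffunP e; apply/ffunP => i; move: (e i); rewrite !ffunE => /addbI. Qed.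

Lemma exists_colG_nbr j u : exists w, colG c j u w.
Proof.
have [g vecK gK] := upper_vector_bij.
set w := g (flip_at j (upper_vector u)).
have vec_w : upper_vector w = flip_at j (upper_vector u) by rewrite gK.
have neq_uw : u != w.
  apply: contra_eqN vec_w => /eqP <-; apply/eqP => /ffunP /(_ j).
  by rewrite !ffunE eqxx; case: (upperG j u).
exists w; rewrite /colG neq_uw /=; apply/idPn => neq_j.
have := upper_colG_edge neq_uw.
have /ffunP /(_ (c u w)) := vec_w; rewrite !ffunE (negbTE neq_j) /= => ->.
by case: (upperG _ u).
Qed.

Lemma deg_colG_gt0 j u : 0 < deg (colG c j) u.
Proof. by have [w auw] := exists_colG_nbr j u; apply/card_gt0P; exists w; rewrite inE. Qed.

Lemma card_upper_colG j : #|[set u | upperG j u]| = #|[set u | ~~ upperG j u]|.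
Proof.
have vec_card (P : pred {ffun 'I_k -> bool}) :
    #|[set u | P (upper_vector u)]| = #|[set f | P f]|.
  rewrite -(on_card_preimset (onW_bij _ upper_vector_bij)).
  by apply: eq_card => u; rewrite !inE.
have flip_card :
    #|[set f : {ffun 'I_k -> bool} | f j]| = #|[set f : {ffun 'I_k -> bool} | ~~ f j]|.
  rewrite -(card_preimset _ (@flip_at_inj j)).
  by apply: eq_card => f; rewrite !inE ffunE eqxx.
transitivity #|[set f : {ffun 'I_k -> bool} | f j]|.
  by rewrite -vec_card; apply: eq_card => u; rewrite !inE ffunE.
by rewrite flip_card -vec_card; apply: eq_card => u; rewrite !inE ffunE.
Qed.

End MonotonePathFreeColoring.

Theorem proposition3p4 (k : nat) (hk : 2 <= k) (n : nat) (hn : 2 ^ k <= n)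
  (c : 'I_n -> 'I_n -> 'I_k) (csym : forall u v, c u v = c v u) :
  exists j : 'I_k, 3 <= mp (colG c j).
Proof.
case: (boolP [exists j, 3 <= mp (colG c j)]) => [/existsP //|/existsPn mp_small].
have mp_lt3 j : mp (colG c j) < 3 by rewrite ltnNge mp_small.
have n_gt0 : 0 < n by apply: leq_trans hn; rewrite expn_gt0.
have k_lt_n : k < n.-1.
  move: hn; rewrite -(prednK (ltnW hk)) expnS.
  have := ltn_expl k.-1 (ltnSn 1); lia.
have [j deg_gt1] := exists_deg_colG_gt1 c (Ordinal n_gt0) k_lt_n.
have no_dm3 := @colG_no_dm3 _ _ _ mp_lt3 j.
have [a [b [aab lower_a lt_ab]]] :=
  exists_lower_edge_deg_lt (colG_sym csym j) (colG_irr c j) no_dm3 deg_gt1.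
have := card_upper_lt_lower (colG_sym csym j) (colG_irr c j) no_dm3
  (deg_colG_gt0 csym mp_lt3 hn j) aab lower_a lt_ab.
by rewrite (card_upper_colG csym mp_lt3 hn) ltnn.
Qed.
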